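(* Let $N\ge2$ and $(b,a)\in\mathcal{M}=\mathbb{R}^N\times\mathbb{R}_{>0}^N$. Then for all $1\le j\le 2N$, $\lambda_j(S(b,a))=-\lambda_{2N+1-j}(b,a)$. If $N$ is even, then for all $1\le j\le N$, $\lambda_j^+(S(b,a))=-\lambda^+_{N+1-j}(b,a)$ and $\lambda_j^-(S(b,a))=-\lambda^-_{N+1-j}(b,a)$; if $N$ is odd, then for all $1\le j\le N$, $\lambda_j^+(S(b,a))=-\lambda^-_{N+1-j}(b,a)$ and $\lambda_j^-(S(b,a))=-\lambda^+_{N+1-j}(b,a)$. Moreover, for all $1\le k\le N-1$, $\gamma_k(S(b,a))=\gamma_{N-k}(b,a)$.
   Context: Indices of $(b,a)$ are mod $N$; $S(b,a)=(b',a')$ with $b'_j=-b_{N-j}$, $a'_j=a_{N-j-1}$. $L^\pm(b,a)$ is the $N\times N$ symmetric matrix with diagonal $b_1,\dots,b_N$, entries $(n,n+1),(n+1,n)$ equal to $a_n$ ($1\le n\le N-1$), and entries $(1,N),(N,1)$ equal to $\pm a_N$. $\lambda^\pm_1\le\dots\le\lambda^\pm_N$ are the eigenvalues of $L^\pm(b,a)$ in increasing order with multiplicity, and $\lambda_1\le\dots\le\lambda_{2N}$ are all eigenvalues of $L^+$ and $L^-$ together, in increasing order with multiplicity (these satisfy $\lambda_1<\lambda_2\le\lambda_3<\dots\le\lambda_{2N-1}<\lambda_{2N}$). The $k$-th gap length is $\gamma_k=\lambda_{2k+1}-\lambda_{2k}$. *)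

From HB Require Import structures.
From mathcomp Require Import all_boot all_order all_algebra.
From mathcomp Require Import reals.
From Stdlib Require Import ClassicalEpsilon.
Set Implicit Arguments. Unset Strict Implicit. Unset Printing Implicit Defensive.
Import Order.TTheory GRing.Theory Num.Theory.
Local Open Scope ring_scope.

Section Toda.
Variable R : realType.

(* A point (b,a) is a pair of sequences indexed 1-based: b_j = fst p j, a_j = snd p j
   for 1 <= j <= N; other values are irrelevant (indices are reduced mod N). *)
Definition pt := ((nat -> R) * (nat -> R))%type.

Definition md (N k : nat) : nat := ((k + N - 1) %% N).+1.

(* S(b,a) = (b',a'), b'_j = - b_{N-j}, a'_j = a_{N-j-1} (indices mod N) *)
Definition Sop (N : nat) (p : pt) : pt :=
  (fun j => - p.1 (md N (N - j)), fun j => p.2 (md N (N + N - j - 1))).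

(* L^{s}(b,a), s = 1 for L^+ and s = -1 for L^-; row/column i : 'I_N stands for i+1.
   Entries from the tridiagonal part and the corner are added (relevant only for N = 2). *)
Definition Lmat (N : nat) (s : R) (p : pt) : 'M[R]_N :=
  \matrix_(i < N, j < N)
    ((i == j :> nat)%:R * p.1 i.+1
     + (j == i.+1 :> nat)%:R * p.2 i.+1
     + (i == j.+1 :> nat)%:R * p.2 j.+1
     + s * p.2 N * (((i == 0%N :> nat) && (j == N.-1 :> nat))%:R
                    + ((i == N.-1 :> nat) && (j == 0%N :> nat))%:R)).

Definition is_eigseq (n : nat) (A : 'M[R]_n) (s : seq R) : Prop :=
  sorted <=%R s /\ char_poly A = \prod_(x <- s) ('X - x%:P).

Definition eigs (n : nat) (A : 'M[R]_n) : seq R :=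
  epsilon (inhabits [::]) (is_eigseq A).

Definition lamp (N : nat) (p : pt) (j : nat) : R := nth 0 (eigs (Lmat N 1 p)) j.-1.
Definition lamm (N : nat) (p : pt) (j : nat) : R := nth 0 (eigs (Lmat N (-1) p)) j.-1.

Definition lam (N : nat) (p : pt) (j : nat) : R :=
  nth 0 (sort <=%R (eigs (Lmat N 1 p) ++ eigs (Lmat N (-1) p))) j.-1.

Definition gap (N : nat) (p : pt) (k : nat) : R := lam N p (2 * k).+1 - lam N p (2 * k).

End Toda.

(* S reverses the cycle 1..N-1 while fixing N.  Conjugating by the signed permutation matrix P
   realising this reversal, with alternating signs, gives
     L^s(S(b,a)) = - P L^s'(b,a) P^T,   s' = s for N even, s' = -s for N odd,
   and P is orthogonal.  Hence the spectrum of L^s(S(b,a)) is the negated spectrum of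
   L^s'(b,a) listed in reverse order; all claims follow by reindexing the sorted lists. *)

From HB Require Import structures.
From mathcomp Require Import all_boot all_order all_algebra.
From mathcomp Require Import fingroup perm reals.
From mathcomp Require Import sesquilinear spectral.
From mathcomp.real_closed Require Import complex.
From mathcomp Require Import zify ring lra.
From Stdlib Require Import ClassicalEpsilon.
Set Implicit Arguments. Unset Strict Implicit. Unset Printing Implicit Defensive.
Import Order.TTheory GRing.Theory Num.Theory.
Local Open Scope ring_scope.

Section CharPoly.
Variable F : comNzRingType.

Lemma char_poly_conj n (P Q A : 'M[F]_n) :
  Q *m P = 1%:M -> char_poly (P *m A *m Q) = char_poly A.
Proof.
move=> QP; have PQ : P *m Q = 1%:M by apply: mulmx1C.
rewrite /char_poly /char_poly_mx !map_mxM.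
set P' := map_mx polyC P; set Q' := map_mx polyC Q.
have PQ' : P' *m Q' = 1%:M by rewrite -map_mxM PQ map_mx1.
have XE : ('X%:M : 'M[{poly F}]_n) = P' *m 'X%:M *m Q'.
  by rewrite mul_mx_scalar -scalemxAl PQ' -mul_mx_scalar mul1mx.
rewrite [in LHS]XE -mulmxBl -mulmxBr !det_mulmx mulrC mulrA -det_mulmx.
by rewrite (mulmx1C PQ') det1 mul1r.
Qed.

Lemma char_polyN n (A : 'M[F]_n) :
  char_poly (- A) = (-1) ^+ n * (char_poly A \Po - 'X).
Proof.
rewrite /char_poly -det_map_mx -detZ; congr (\det _).
apply/matrixP => i j; rewrite !mxE.
rewrite rmorphB rmorphMn /= comp_polyX comp_polyC polyCN.
by case: (i == j); rewrite ?mulr1n ?mulr0n; ring.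
Qed.

Lemma prod_XsubC_compN (s : seq F) :
  (-1) ^+ size s * (\prod_(x <- s) ('X - x%:P) \Po - 'X) =
  \prod_(x <- map -%R s) ('X - x%:P).
Proof.
elim: s => [|x s IHs]; first by rewrite /= !big_nil comp_polyC mul1r.
rewrite /= !big_cons comp_polyM exprS -IHs comp_polyB comp_polyX comp_polyC polyCN.
ring.
Qed.

End CharPoly.

Section SymmetricEigenvalues.
Variable R : realType.

Lemma is_eigseq_size n (A : 'M[R]_n) s : is_eigseq A s -> size s = n.
Proof.
case=> _ /(congr1 (size : {poly R} -> nat)).
by rewrite size_char_poly size_prod_XsubC => -[].
Qed.

Lemma eigs_unique n (A : 'M[R]_n) s : is_eigseq A s -> eigs A = s.
Proof.
move=> As; have [sorted_eigs charA] : is_eigseq A (eigs A).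
  by rewrite /eigs; apply: epsilon_spec; exists s.
case: As => sorted_s chars.
apply: (sorted_eq le_trans le_anti) => //.
by apply: prod_XsubC_eq; rewrite -charA -chars.
Qed.

Lemma sym_is_eigseq_exists n (A : 'M[R]_n) : A^T = A -> exists s, is_eigseq A s.
Proof.
move=> Asym; pose f := real_complex R; pose AC := map_mx f A.
have ACherm : AC \is hermsymmx.
  apply: realsym_hermsym.
    by apply/is_hermitianmxP; rewrite expr0 scale1r map_mx_id // /AC map_trmx Asym.
  by apply/mxOverP => i j; rewrite mxE; apply/complex_realP; exists (A i j).
have /mxOverP d_real := hermitian_spectral_diag_real ACherm.
have /orthomx_spectralP ACE := hermitian_normalmx ACherm.
set d := spectral_diag AC in d_real ACE.
have dE i : d 0 i = f (complex.Re (d 0 i)).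
  by have /complex_realP [k ->] := d_real 0 i.
exists (sort <=%R [seq complex.Re (d 0 i) | i <- enum 'I_n]).
split; first exact/sort_sorted/le_total.
apply: (@map_poly_inj _ _ f).
rewrite map_char_poly -/AC ACE char_poly_conj; last by rewrite mulmxV // spectral_unit.
rewrite char_poly_trig; last by apply/is_trig_mxP => i j ltij; rewrite mxE -val_eqE /= ltn_eqF.
rewrite (perm_big _ (permEl (perm_sort _ _))) big_map big_enum rmorph_prod.
apply: eq_bigr => i _.
by rewrite rmorphB /= map_polyX map_polyC /= mxE eqxx mulr1n -/d {1}(dE i).
Qed.

Lemma eigs_is_eigseq n (A : 'M[R]_n) : A^T = A -> is_eigseq A (eigs A).
Proof. by move=> /sym_is_eigseq_exists [s As]; rewrite (eigs_unique As). Qed.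

Lemma eigs_opp_conj n (P Q A : 'M[R]_n) : A^T = A -> Q *m P = 1%:M ->
  eigs (- (P *m A *m Q)) = rev (map -%R (eigs A)).
Proof.
move=> /eigs_is_eigseq As QP; have size_eigs := is_eigseq_size As.
case: As => sorted_eigs charA; apply: eigs_unique; split.
  by rewrite rev_sorted sorted_map; apply: sub_sorted sorted_eigs => x y; rewrite /= lerN2.
rewrite char_polyN char_poly_conj // charA -{1}size_eigs prod_XsubC_compN.
by apply: perm_big; rewrite perm_sym perm_rev.
Qed.

End SymmetricEigenvalues.

Section TodaReflection.
Variable R : realType.
Implicit Types (N : nat) (s : R) (b a : nat -> R).

Lemma Lmat_sym N s p : (Lmat N s p)^T = Lmat N s p.
Proof.
apply/matrixP => i j; rewrite !mxE.
have [->|ne] := eqVneq i j; first by [].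
have /negbTE nij : (i != j :> nat) by [].
rewrite nij eq_sym nij !mul0r !add0r.
by rewrite (addrC ((j == i.+1 :> nat)%:R * _)) (addrC (((j == 0%N :> nat) && _)%:R))
  (andbC (j == 0%N :> nat)) (andbC (j == N.-1 :> nat)).
Qed.

Lemma LmatC N s p (i j : 'I_N) : Lmat N s p i j = Lmat N s p j i.
Proof. by rewrite -{1}Lmat_sym mxE. Qed.

Lemma md_eq N k r m : (0 < r <= N)%N -> (k + N - 1 = r.-1 + m * N)%N -> md N k = r.
Proof.
by move=> /andP[r0 rN] kE; rewrite /md kE addnC modnMDl modn_small ?prednK //; lia.
Qed.

(* On 1-based indices: j |-> N - j on 1..N-1, fixing N, i.e. the reindexing done by [Sop]. *)
Definition mirror N (i : nat) : nat := if i == N.-1 then N.-1 else (N - 2 - i)%N.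

Lemma mirror_lt N i : (i < N)%N -> (mirror N i < N)%N.
Proof. by rewrite /mirror; case: eqP; lia. Qed.

Lemma mirrorK N i : (i < N)%N -> mirror N (mirror N i) = i.
Proof. by rewrite /mirror; case: (i =P N.-1) => [->|]; rewrite ?eqxx //; case: eqP; lia. Qed.

Lemma Sop_fst N b a i : (i < N)%N -> (Sop N (b, a)).1 i.+1 = - b (mirror N i).+1.
Proof.
move=> iN; rewrite /Sop /mirror /=; congr (- b _).
by case: eqP => ?; [apply: (@md_eq _ _ _ 0) | apply: (@md_eq _ _ _ 1)]; lia.
Qed.

Lemma Sop_snd N b a k : (2 <= N)%N -> (0 < k <= N)%N ->
  (Sop N (b, a)).2 k = a (if k == N then N.-1 else (mirror N k).+1).
Proof.
move=> N2 kN; rewrite /Sop /mirror /=; congr (a _).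
case: eqP => ?; last case: eqP => ?; first [apply: (@md_eq _ _ _ 1); lia | apply: (@md_eq _ _ _ 2); lia].
Qed.

Definition mirror_ord N (i : 'I_N) : 'I_N := Ordinal (mirror_lt (ltn_ord i)).

Lemma mirror_ordK N : involutive (@mirror_ord N).
Proof. by move=> i; apply: val_inj; rewrite /= mirrorK. Qed.

Definition mirror_perm N : 'S_N := perm (inv_inj (@mirror_ordK N)).

(* Alternating signs negate the tridiagonal off-diagonal entries; the sign [s] at the last
   index fixes the sign of the two corner entries. *)
Definition mirror_sign N s (i : nat) : R :=
  if i == N.-1 then s else if odd i then 1 else -1.

Definition mirror_mx N s : 'M[R]_N :=
  diag_mx (\row_i mirror_sign N s i) *m perm_mx (mirror_perm N).

Lemma mirror_mx_orthogonal N s : s = 1 \/ s = -1 ->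
  (mirror_mx N s)^T *m mirror_mx N s = 1%:M.
Proof.
move=> s_sign; rewrite trmx_mul tr_diag_mx tr_perm_mx mulmxA -(mulmxA _ _ (diag_mx _)).
rewrite mulmx_diag (_ : diag_mx _ = 1%:M); last first.
  apply/matrixP => i j; rewrite !mxE /mirror_sign.
  by case: eqP => _; [case: s_sign => -> | case: odd]; rewrite ?mulN1r ?opprK ?mul1r.
by rewrite mulmx1 -perm_mxM mulVg perm_mx1.
Qed.

Lemma mirror_mx_conjE N s (A : 'M[R]_N) i j :
  (mirror_mx N s *m A *m (mirror_mx N s)^T) i j =
  mirror_sign N s i * A (mirror_ord i) (mirror_ord j) * mirror_sign N s j.
Proof.
rewrite trmx_mul tr_diag_mx tr_perm_mx !mulmxA mul_mx_diag mxE.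
by rewrite -!mulmxA mul_diag_mx mxE mulmxA -row_permE -col_permE !mxE !permE.
Qed.

(* Entry identities for these tridiagonal-plus-corner matrices are decided by splitting on
   every comparison of nat indices and matching the remaining [b _], [a _] terms by [lia]. *)
Ltac noif t := lazymatch t with context [if _ then _ else _] => fail | _ => idtac end.

Ltac decide_nat_eqs :=
  repeat match goal with
  | |- context [?x == ?y] =>
      noif x; noif y;
      first [ rewrite (_ : (x == y) = false); last by apply/eqP; lia
            | rewrite (_ : (x == y) = true); last by apply/eqP; lia
            | case: (x =P y) => ? ]
  end.

Ltac unify_args f :=
  repeat match goal with |- context [f ?x] =>
    match goal with |- context [f ?y] =>
      assert_fails (constr_eq x y);
      rewrite [f x](_ : f x = f y); last by congr f; lia end end.

Lemma Lmat_Sop_entry N s b a (i j : 'I_N) : s = 1 \/ s = -1 -> (2 <= N)%N -> (i <= j)%N ->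
  Lmat N s (Sop N (b, a)) i j =
  - (mirror_sign N s i * Lmat N (if odd N then - s else s) (b, a) (mirror_ord i) (mirror_ord j)
     * mirror_sign N s j).
Proof.
have oddE k : odd k = (k %% 2 == 1)%N by rewrite modn2; case: odd.
move=> s_sign N2 ij; have iN := ltn_ord i; have jN := ltn_ord j.
rewrite !mxE Sop_fst // !Sop_snd //; [rewrite /= | lia..].
rewrite /mirror_sign /mirror !oddE; decide_nat_eqs.
all: rewrite /= ?mulr0n ?mulr1n ?mul0r ?mulr0 ?mul1r ?addr0 ?add0r.
all: unify_args b; unify_args a; case: s_sign => ->; lra.
Qed.

Lemma Lmat_Sop N s b a : s = 1 \/ s = -1 -> (2 <= N)%N ->
  Lmat N s (Sop N (b, a)) =
  - (mirror_mx N s *m Lmat N (if odd N then - s else s) (b, a) *m (mirror_mx N s)^T).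
Proof.
move=> s_sign N2; apply/matrixP => i j; rewrite [RHS]mxE mirror_mx_conjE.
wlog ij : i j / (i <= j)%N => [sym|]; last exact: Lmat_Sop_entry.
have [|ji] := leqP i j; first exact: sym.
by rewrite LmatC sym 1?ltnW // LmatC; ring.
Qed.

Lemma eigs_Lmat_Sop N s b a : s = 1 \/ s = -1 -> (2 <= N)%N ->
  eigs (Lmat N s (Sop N (b, a))) =
  rev (map -%R (eigs (Lmat N (if odd N then - s else s) (b, a)))).
Proof.
by move=> s_sign N2; rewrite Lmat_Sop // eigs_opp_conj ?Lmat_sym ?mirror_mx_orthogonal.
Qed.

Lemma size_eigs_Lmat N s p : size (eigs (Lmat N s p)) = N.
Proof. exact/is_eigseq_size/eigs_is_eigseq/Lmat_sym. Qed.
End TodaReflection.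

Section ReversedSpectrum.
Variable R : realType.

Lemma sort_map_opp (s : seq R) : sort <=%R (map -%R s) = rev (map -%R (sort <=%R s)).
Proof.
apply: (sorted_eq le_trans le_anti); first exact/sort_sorted/le_total.
  by rewrite rev_sorted sorted_map; apply: sub_sorted (sort_sorted le_total s) => x y; rewrite /= lerN2.
by rewrite perm_sort perm_sym perm_rev perm_map // perm_sort.
Qed.

Lemma sort_cat_rev_map_opp (u v w : seq R) : perm_eq (u ++ v) w ->
  sort <=%R (rev (map -%R u) ++ rev (map -%R v)) = rev (map -%R (sort <=%R w)).
Proof.
move=> uvw; rewrite -sort_map_opp; apply/(perm_sortP le_total le_trans le_anti).
by rewrite -rev_cat -map_cat perm_rev perm_map // perm_catC.
Qed.

Lemma nth_rev_map_opp (s : seq R) n j : size s = n -> (0 < j <= n)%N ->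
  (rev (map -%R s))`_j.-1 = - s`_(n + 1 - j).-1.
Proof.
move=> sn jn; rewrite nth_rev size_map sn; last lia.
rewrite (nth_map 0); last by rewrite sn; lia.
by congr (- _`_ _); lia.
Qed.

End ReversedSpectrum.

Theorem lemma2p3 (R : realType) (N : nat) (b a : nat -> R) :
  (2 <= N)%N ->
  (forall j : nat, (1 <= j <= N)%N -> 0 < a j) ->
  (forall j : nat, (1 <= j <= 2 * N)%N ->
     lam N (Sop N (b, a)) j = - lam N (b, a) (2 * N + 1 - j)) /\
  (~~ odd N -> forall j : nat, (1 <= j <= N)%N ->
     lamp N (Sop N (b, a)) j = - lamp N (b, a) (N + 1 - j) /\
     lamm N (Sop N (b, a)) j = - lamm N (b, a) (N + 1 - j)) /\
  (odd N -> forall j : nat, (1 <= j <= N)%N ->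
     lamp N (Sop N (b, a)) j = - lamm N (b, a) (N + 1 - j) /\
     lamm N (Sop N (b, a)) j = - lamp N (b, a) (N + 1 - j)) /\
  (forall k : nat, (1 <= k <= N - 1)%N ->
     gap N (Sop N (b, a)) k = gap N (b, a) (N - k)).
Proof.
move=> N2 _; rewrite /gap /lam /lamp /lamm.
set ep := eigs (Lmat N 1 (b, a)); set em := eigs (Lmat N (-1) (b, a)).
have [size_ep size_em] : size ep = N /\ size em = N by rewrite !size_eigs_Lmat.
have Sp : eigs (Lmat N 1 (Sop N (b, a))) = rev (map -%R (if odd N then em else ep)).
  by rewrite eigs_Lmat_Sop //; [case: odd | left].
have Sm : eigs (Lmat N (-1) (Sop N (b, a))) = rev (map -%R (if odd N then ep else em)).
  by rewrite eigs_Lmat_Sop //; [case: odd; rewrite ?opprK | right].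
have Sall : sort <=%R (eigs (Lmat N 1 (Sop N (b, a))) ++ eigs (Lmat N (-1) (Sop N (b, a))))
    = rev (map -%R (sort <=%R (ep ++ em))).
  by rewrite Sp Sm; apply: sort_cat_rev_map_opp; case: odd => //; rewrite perm_catC.
have size_all : size (sort <=%R (ep ++ em)) = (2 * N)%N.
  by rewrite size_sort size_cat size_ep size_em; lia.
split; first by move=> j jN; rewrite Sall (nth_rev_map_opp size_all jN).
split; [move=> /negbTE Nodd j jN | split; [move=> Nodd j jN | move=> k kN]].
- by rewrite Sp Sm Nodd !(nth_rev_map_opp size_ep, nth_rev_map_opp size_em).
- by rewrite Sp Sm Nodd !(nth_rev_map_opp size_ep, nth_rev_map_opp size_em).
rewrite Sall !(nth_rev_map_opp size_all); [| lia..].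
have -> : (2 * N + 1 - (2 * k).+1).-1 = (2 * (N - k)).-1 :> nat by lia.
have -> : (2 * N + 1 - (2 * k).+1.-1).-1 = (2 * (N - k)).+1.-1 :> nat by lia.
by rewrite opprK addrC.
Qed.
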